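(* Let $p\in\mathbb{N}$ and let $r_p$ be the maximal positive root of the equation $8r^{2p}+r^{2(p-1)}-6r^{p-1}+1=0$. Then $2r_p^{p+1}\le 1$. *)

From mathcomp Require Import all_boot all_order all_algebra.
From mathcomp Require Import reals.
Set Implicit Arguments. Unset Strict Implicit. Unset Printing Implicit Defensive.
Import Order.TTheory GRing.Theory Num.Theory.
Local Open Scope ring_scope.

(* q_p(r) = 8 r^(2p) + r^(2(p-1)) - 6 r^(p-1) + 1, with integer exponents
   (so that p = 0 is treated with genuine negative powers). *)
Definition rp_eq {R : realType} (p : nat) (r : R) : R :=
  8 * r ^ (2 * (p : int)) + r ^ (2 * ((p : int) - 1)) - 6 * r ^ ((p : int) - 1) + 1.

Definition is_max_pos_root {R : realType} (p : nat) (r : R) : Prop :=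
  0 < r /\ rp_eq p r = 0 /\ (forall s : R, 0 < s -> rp_eq p s = 0 -> s <= r).

From mathcomp Require Import all_boot all_order all_algebra.
From mathcomp Require Import reals.
From mathcomp Require Import ring.
Set Implicit Arguments. Unset Strict Implicit. Unset Printing Implicit Defensive.
Import Order.TTheory GRing.Theory Num.Theory.
Local Open Scope ring_scope.

(* With x = r^(p-1) and y = r^(p+1) the equation reads 8xy + x^2 - 6x + 1 = 0,
   and then 4x(1 - 2y) = (x - 1)^2 >= 0; since x > 0 this gives 2y <= 1. *)

Lemma rp_eqE (R : realType) (p : nat) (r : R) : r != 0 ->
  rp_eq p r = 8 * (r ^ ((p : int) - 1) * r ^+ p.+1)
              + (r ^ ((p : int) - 1)) ^+ 2 - 6 * r ^ ((p : int) - 1) + 1.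
Proof.
move=> r_neq0; have r_unit : r \is a GRing.unit by rewrite unitfE.
have e2p : 2 * (p : int) = ((p : int) - 1) + (p.+1 : int).
  by rewrite intS; ring.
by rewrite /rp_eq e2p exprzDr // [2 * _]mulrC -exprz_exp natz.
Qed.

Lemma mul2r_le1_of_root (F : realDomainType) (x y : F) :
  0 < x -> 8 * (x * y) + x ^+ 2 - 6 * x + 1 = 0 -> 2 * y <= 1.
Proof.
move=> x_gt0 root_xy.
have sq_id : 4 * x * (1 - 2 * y) = (x - 1) ^+ 2.
  by rewrite -[RHS]subr0 -root_xy; ring.
have : 0 <= x * (1 - 2 * y).
  by rewrite -(pmulr_rge0 _ (ltr0n F 4)) mulrA sq_id sqr_ge0.
by rewrite (pmulr_rge0 _ x_gt0) subr_ge0.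
Qed.

Theorem lemma1 (R : realType) (p : nat) (r : R) :
  is_max_pos_root p r -> 2 * r ^+ p.+1 <= 1.
Proof.
move=> [r_gt0 [root_r _]].
apply: (mul2r_le1_of_root (exprz_gt0 ((p : int) - 1) r_gt0)).
by rewrite -rp_eqE ?gt_eqF.
Qed.
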